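(* Let $\mathcal{H}$ be a complex Hilbert space, let $A\in\mathcal{B}(\mathcal{H})$ be positive, let $S\in\mathcal{B}_A(\mathcal{H})$ and let $\alpha\in\mathbb{C}$ with $\alpha\neq 0$. Then $$d\omega_A^2(S)\le \omega_A^2\left(S^{\sharp_A}S+S\right)+\frac{2}{|\alpha|}\,\omega_A\left(S^{\sharp_A}S^2\right)+\frac{\max\{1,|\alpha-1|\}}{|\alpha|}\left\|\left(S^{\sharp_A}S\right)^2+S^{\sharp_A}S\right\|_A .$$
   Context: $\mathcal{B}(\mathcal{H})$ denotes the bounded linear operators on $\mathcal{H}$. For positive $A$, set $\langle x,z\rangle_A=\langle Ax,z\rangle$ and $\|z\|_A=\|A^{1/2}z\|=\sqrt{\langle z,z\rangle_A}$ (a seminorm). $\mathcal{B}_A(\mathcal{H})$ is the set of $S\in\mathcal{B}(\mathcal{H})$ admitting an $A$-adjoint, i.e. for which there is $R\in\mathcal{B}(\mathcal{H})$ with $AR=S^*A$ (equivalently $\mathcal{R}(S^*A)\subseteq\mathcal{R}(A)$). For $S\in\mathcal{B}_A(\mathcal{H})$, $S^{\sharp_A}=A^{\dagger}S^*A$, where $A^\dagger$ is the Moore–Penrose inverse of $A$; it satisfies $AS^{\sharp_A}=S^*A$ and $\mathcal{R}(S^{\sharp_A})\subseteq\overline{\mathcal{R}(A)}$. For operators $T$ with $\|Tz\|_A\le c\|z\|_A$ for all $z$: $\|T\|_A=\sup\{\|Tz\|_A:\|z\|_A=1\}$, $\omega_A(T)=\sup\{|\langle Tz,z\rangle_A|:\|z\|_A=1\}$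 ($A$-numerical radius), and $d\omega_A(T)=\sup\{(|\langle Tz,z\rangle_A|^2+\|Tz\|_A^4)^{1/2}:\|z\|_A=1\}$ ($A$-Davis–Wielandt radius). *)

From HB Require Import structures.
From mathcomp Require Import all_boot all_order all_algebra.
From mathcomp Require Import complex.
From mathcomp Require Import boolp classical_sets reals.
Set Implicit Arguments. Unset Strict Implicit. Unset Printing Implicit Defensive.
Import Order.TTheory GRing.Theory Num.Theory.
Local Open Scope ring_scope.
Local Open Scope classical_set_scope.

Section HilbertDefs.
Variable R : realType.
Variable V : lmodType R[i].
Variable ip : V -> V -> R[i].   (* inner product, linear in the first argument *)

Definition hnorm (x : V) : R := Num.sqrt (complex.Re (ip x x)).

Definition is_inner_product : Prop :=
  [/\ (forall (a : R[i]) (x y z : V), ip (a *: x + y) z = a * ip x z + ip y z),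
      (forall x y : V, ip y x = conjc (ip x y)),
      (forall x : V, 0 <= ip x x)
    & (forall x : V, ip x x = 0 -> x = 0)].

Definition ip_complete : Prop :=
  forall u : nat -> V,
    (forall e : R, 0 < e -> exists N : nat, forall m n : nat,
        (N <= m)%N -> (N <= n)%N -> hnorm (u m - u n) < e) ->
    exists l : V, forall e : R, 0 < e -> exists N : nat, forall n : nat,
        (N <= n)%N -> hnorm (u n - l) < e.

Definition hilbert_space : Prop := is_inner_product /\ ip_complete.

Definition bounded_op (T : V -> V) : Prop :=
  (forall (a : R[i]) (x y : V), T (a *: x + y) = a *: T x + T y) /\
  exists c : R, forall x : V, hnorm (T x) <= c * hnorm x.

Definition is_adjoint (T Tstar : V -> V) : Prop :=
  forall x y : V, ip (T x) y = ip x (Tstar y).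

Definition positive_op (A : V -> V) : Prop :=
  bounded_op A /\ forall x : V, 0 <= ip (A x) x.

Definition in_closure_range (A : V -> V) (y : V) : Prop :=
  forall e : R, 0 < e -> exists x : V, hnorm (y - A x) < e.

Variable A : V -> V.

Definition ipA (x z : V) : R[i] := ip (A x) z.
Definition normA (z : V) : R := Num.sqrt (complex.Re (ipA z z)).

Definition opnormA (T : V -> V) : R :=
  sup [set r : R | exists z : V, normA z = 1 /\ r = normA (T z)].
Definition omegaA (T : V -> V) : R :=
  sup [set r : R | exists z : V, normA z = 1 /\ r = Normc.normc (ipA (T z) z)].
Definition dwA (T : V -> V) : R :=
  sup [set r : R | exists z : V, normA z = 1 /\
       r = Num.sqrt (Normc.normc (ipA (T z) z) ^+ 2 + normA (T z) ^+ 4)].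

(* Ssh = S^{#_A}: the A-adjoint A^+ S^* A of S, characterised as the unique
   bounded R with A R = S^* A and range(R) in the closure of range(A). *)
Definition is_A_sharp (S Sstar Ssh : V -> V) : Prop :=
  [/\ bounded_op Ssh,
      (forall x : V, A (Ssh x) = Sstar (A x))
    & (forall x : V, in_closure_range A (Ssh x))].

End HilbertDefs.

From HB Require Import structures.
From mathcomp Require Import all_boot all_order all_algebra.
From mathcomp Require Import complex.
From mathcomp Require Import boolp classical_sets reals.
From mathcomp Require Import ring lra.
Import Order.TTheory GRing.Theory Num.Theory.
Local Open Scope ring_scope.
Local Open Scope complex_scope.
Local Open Scope classical_set_scope.
Set Implicit Arguments. Unset Strict Implicit.

(* Fix z with ||z||_A = 1 and put s = <Sz,z>_A and t = ||Sz||_A^2 = <S^#S z,z>_A.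
   Then |s|^2 + t^2 <= |t + s|^2 + 2 t |s|, where t + s = <(S^#S + S) z, z>_A.
   The product t |s| = |<Sz,z>_A <z,S^#S z>_A| is bounded by the generalised
   Buzano inequality |alpha| |<x,e><e,y>| <= max(1,|alpha-1|) ||x|| ||y|| + |<x,y>|
   (for ||e|| = 1, obtained from the norm of alpha P_e - I), using
   <Sz, S^#S z>_A = <S^#S^2 z, z>_A and
   2 ||Sz||_A ||S^#S z||_A <= ||Sz||_A^2 + ||S^#S z||_A^2 = <((S^#S)^2 + S^#S) z, z>_A.
   Passing to suprema needs every operator involved to be A-bounded, since [sup]
   of an unbounded set is 0.  This reduces to the A-selfadjoint T = S^#S, for which
   the power trick ||Tx||_A^(2^k) <= ||T^(2^k) x||_A ||x||_A^(2^k - 1), combined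
   with the Hilbert-space bound on T^(2^k), gives ||Tx||_A <= ||T|| ||x||_A. *)

Section ComplexFacts.
Variable R : realType.
Implicit Types (z w : R[i]) (t : R).

Lemma ge0_Re z : 0 <= z -> 0 <= complex.Re z.
Proof. by rewrite lecE => /andP[]. Qed.

Lemma ge0_complexE z : 0 <= z -> z = (complex.Re z)%:C.
Proof. by move=> /ger0_real /RRe_real. Qed.

Lemma normc_ge0 z : 0 <= Normc.normc z.
Proof. by case: z => a b; exact: sqrtr_ge0. Qed.

Lemma normc_gt0 z : z != 0 -> 0 < Normc.normc z.
Proof. by move=> z0; rewrite lt_def normc_ge0 andbT; apply: contra z0 => /eqP/Normc.eq0_normc ->. Qed.

Lemma sqr_normc z : Normc.normc z ^+ 2 = complex.Re z ^+ 2 + complex.Im z ^+ 2.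
Proof. by case: z => a b /=; rewrite sqr_sqrtr // addr_ge0 // sqr_ge0. Qed.

Lemma normc_real t : Normc.normc t%:C = `|t|.
Proof. by rewrite /= expr0n /= addr0 sqrtr_sqr. Qed.

Lemma ReD z w : complex.Re (z + w) = complex.Re z + complex.Re w.
Proof. by case: z; case: w. Qed.

Lemma Re_conjc z : complex.Re (z^*) = complex.Re z.
Proof. by case: z. Qed.

Lemma Re_le_normc z : complex.Re z <= Normc.normc z.
Proof.
case: z => a b /=; apply: le_trans (ler_norm a) _.
rewrite -sqrtr_sqr; apply: ler_wsqrtr; rewrite lerDl; exact: sqr_ge0.
Qed.

Lemma sqr_normc_addr_real_ge z t : 0 <= t ->
  Normc.normc z ^+ 2 + t ^+ 2 <= Normc.normc (t%:C + z) ^+ 2 + 2 * t * Normc.normc z.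
Proof.
move=> t0; rewrite !sqr_normc.
have := Re_le_normc (- z); have := normc_ge0 z; have := sqr_normc z.
rewrite normcN; case: z => a b /=; rewrite add0r.
move: (Num.sqrt _) => n; nra.
Qed.

End ComplexFacts.

Section RealFacts.
Variable R : realType.
Implicit Types (a b c m q K : R) (E : set R).

Lemma le_mul_of_quadratic_ge0 a m c : 0 <= c -> 0 <= m ->
  (forall r, 0 <= a - 2 * r * m + r ^+ 2 * m * c) -> m <= a * c.
Proof.
move=> c0 m0 Hq; have [cp|] := ltrP 0 c.
  have := Hq c^-1; rewrite expr2.
  have -> : a - 2 * c^-1 * m + c^-1 * c^-1 * m * c = (a * c - m) / c.
    by field; rewrite gt_eqF.
  by rewrite pmulr_lge0 ?invr_gt0 // subr_ge0.
move=> c_le0; have c_eq0 : c = 0 by apply/eqP; rewrite eq_le c_le0 c0.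
subst c; rewrite mulr0; have [mp|//] := ltrP 0 m.
have := Hq ((a + 1) / (2 * m)).
have -> : a - 2 * ((a + 1) / (2 * m)) * m + ((a + 1) / (2 * m)) ^+ 2 * m * 0 = -1.
  by field; rewrite gt_eqF.
by rewrite ler0N1.
Qed.

Lemma bernoulli_ineq b n : 0 <= b -> 1 + b *+ n <= (1 + b) ^+ n.
Proof.
move=> b0; elim: n => [|n IH]; first by rewrite expr0 mulr0n addr0.
rewrite exprS mulrSr; apply: le_trans (ler_wpM2l _ IH); last by rewrite addr_ge0.
rewrite -mulr_natr; have : 0 <= n%:R :> R by []; nra.
Qed.

Lemma le1_of_bounded_pow2 q K : (forall k, q ^+ (2 ^ k) <= K) -> q <= 1.
Proof.
move=> HK; rewrite leNgt; apply/negP => q_gt1.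
have b0 : 0 < q - 1 by rewrite subr_gt0.
pose k := Num.bound (K / (q - 1)).
have hk : K / (q - 1) < 2 ^+ k := upper_nthrootP (leqnn k).
have := bernoulli_ineq (2 ^ k) (ltW b0); rewrite subrKC -mulr_natr natrX => hB.
have := HK k; rewrite ltr_pdivrMr // in hk.
rewrite mulrC in hB; lra.
Qed.

Lemma sup_ge0 E : (forall r, E r -> 0 <= r) -> 0 <= sup E.
Proof.
move=> E_ge0; have [[[r Er] ubE]|/sup_out ->//] := pselect (has_sup E).
exact: le_trans (E_ge0 r Er) (ub_le_sup ubE Er).
Qed.

Lemma sup_le_ub_ge0 E b : 0 <= b -> ubound E b -> sup E <= b.
Proof.
move=> b0 ubE; have [/ge_sup -> //|E0] := pselect (E !=set0).
suff -> : E = set0 by rewrite sup0.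
by apply/seteqP; split => // r Er; apply: E0; exists r.
Qed.

End RealFacts.

Section SemiInnerProduct.
Variables (R : realType) (V : lmodType R[i]) (f : V -> V -> R[i]).
Hypothesis f_linl : forall (a : R[i]) x y z, f (a *: x + y) z = a * f x z + f y z.
Hypothesis f_herm : forall x y, f y x = (f x y)^*.
Hypothesis f_ge0 : forall x, 0 <= f x x.

Lemma form0l z : f 0 z = 0.
Proof. by have := f_linl (-1) 0 0 z; rewrite scaler0 addr0 mulN1r addNr. Qed.

Lemma formDl x y z : f (x + y) z = f x z + f y z.
Proof. by have := f_linl 1 x y z; rewrite scale1r mul1r. Qed.

Lemma formZl a x z : f (a *: x) z = a * f x z.
Proof. by have := f_linl a x 0 z; rewrite !addr0 form0l addr0. Qed.

Lemma formBl x y z : f (x - y) z = f x z - f y z.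
Proof. by rewrite formDl -scaleN1r formZl mulN1r. Qed.

Lemma formDr x y z : f z (x + y) = f z x + f z y.
Proof. by rewrite f_herm formDl rmorphD /= -!f_herm. Qed.

Lemma formZr a x z : f z (a *: x) = a^* * f z x.
Proof. by rewrite f_herm formZl rmorphM /= -f_herm. Qed.

Lemma formBr x y z : f z (x - y) = f z x - f z y.
Proof. by rewrite f_herm formBl rmorphB /= -!f_herm. Qed.

Definition qf x := complex.Re (f x x).
Definition nf x := Num.sqrt (qf x).

Lemma formxxE x : f x x = (qf x)%:C.
Proof. exact: ge0_complexE. Qed.

Lemma qf_ge0 x : 0 <= qf x.
Proof. exact: ge0_Re. Qed.

Lemma nf_ge0 x : 0 <= nf x.
Proof. exact: sqrtr_ge0. Qed.

Lemma sqr_nf x : nf x ^+ 2 = qf x.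
Proof. by rewrite sqr_sqrtr // qf_ge0. Qed.

Lemma nf_le_of_qf_le x y c : 0 <= c -> qf y <= c ^+ 2 * qf x -> nf y <= c * nf x.
Proof. by move=> c_ge0 le_xy; rewrite -[c]ger0_norm // -sqrtr_sqr -sqrtrM ?sqr_ge0 // ler_wsqrtr. Qed.

Lemma cauchy_schwarz_sqr x y : Normc.normc (f x y) ^+ 2 <= qf x * qf y.
Proof.
rewrite sqr_normc; apply: le_mul_of_quadratic_ge0; [exact: qf_ge0|by rewrite addr_ge0 ?sqr_ge0|].
move=> r; pose t := - (r%:C * f x y).
have := qf_ge0 (x + t *: y); rewrite /qf !formDl !formDr !formZl !formZr (f_herm x y) !formxxE /t.
case: (f x y) => p1 p2; move: (qf x) (qf y) => a c /= h; nra.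
Qed.

Lemma cauchy_schwarz x y : Normc.normc (f x y) <= nf x * nf y.
Proof.
rewrite -sqrtrM ?qf_ge0 // -[Normc.normc _]ger0_norm ?normc_ge0 // -sqrtr_sqr.
exact/ler_wsqrtr/cauchy_schwarz_sqr.
Qed.

Lemma nfD_le x y : nf (x + y) <= nf x + nf y.
Proof.
rewrite -[nf x + nf y]ger0_norm ?addr_ge0 ?nf_ge0 // -sqrtr_sqr; apply: ler_wsqrtr.
rewrite /qf !formDl !formDr !ReD (f_herm x y) Re_conjc.
rewrite -[complex.Re (f x x)]sqr_nf -[complex.Re (f y y)]sqr_nf.
have := le_trans (Re_le_normc (f x y)) (cauchy_schwarz x y); nra.
Qed.

Lemma nf_dilate_proj_sub alpha e x : f e e = 1 ->
  nf (alpha * f x e *: e - x) <= Num.max 1 (Normc.normc (alpha - 1)) * nf x.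
Proof.
move=> ee1; set m := Num.max _ _.
have m_ge0 : 0 <= m by rewrite le_max ler01.
have m_ge1 : 1 <= m ^+ 2 by rewrite exprn_ege1 // le_max lexx.
have am : Normc.normc (alpha - 1) ^+ 2 <= m ^+ 2.
  by rewrite lerXn2r ?nnegrE ?normc_ge0 // le_max lexx orbT.
have px : Normc.normc (f x e) ^+ 2 <= qf x.
  by have := cauchy_schwarz_sqr x e; rewrite /qf ee1 /= mulr1.
rewrite -[m]ger0_norm // -sqrtr_sqr -sqrtrM ?sqr_ge0 //; apply: ler_wsqrtr.
rewrite /qf formBl !formBr !formZl !formZr ee1 (f_herm x e) formxxE.
move: px am m_ge1; rewrite !sqr_normc; have := qf_ge0 x; clearbody m.
case: alpha (f x e) => a1 a2 [p1 p2]; move: (qf x) => X /=; nra.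
Qed.

Lemma buzano_ineq alpha e x y : f e e = 1 ->
  Normc.normc alpha * Normc.normc (f x e * f e y) <=
  Num.max 1 (Normc.normc (alpha - 1)) * nf x * nf y + Normc.normc (f x y).
Proof.
move=> ee1; rewrite -Normc.normcM.
have -> : alpha * (f x e * f e y) = f (alpha * f x e *: e - x) y + f x y.
  by rewrite formBl formZl; ring.
apply: le_trans (le_normcD _ _) _; rewrite lerD2r.
apply: le_trans (cauchy_schwarz _ _) _.
by apply: ler_wpM2r; [exact: nf_ge0 | exact: nf_dilate_proj_sub].
Qed.

Section SymmetricOperator.
Variable T : V -> V.
Hypothesis T_sym : forall u v, f (T u) v = f u (T v).

Lemma form_iter_sym j u v : f (iter j T u) v = f u (iter j T v).
Proof. by elim: j u v => [//|j IH] u v; rewrite iterSr IH T_sym. Qed.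

Lemma sqr_qf_iter j x : qf (iter j T x) ^+ 2 <= qf (iter (j + j) T x) * qf x.
Proof.
have -> : qf (iter j T x) = complex.Re (f (iter (j + j) T x) x).
  by rewrite /qf iterD [in RHS]form_iter_sym.
apply: le_trans (cauchy_schwarz_sqr _ _); rewrite lerXn2r ?nnegrE ?normc_ge0 ?Re_le_normc //.
by rewrite iterD form_iter_sym; exact: qf_ge0.
Qed.

Lemma qf_iter_pow2 k x :
  qf (T x) ^+ (2 ^ k) * qf x <= qf (iter (2 ^ k) T x) * qf x ^+ (2 ^ k).
Proof.
have [x0|x_neq0] := eqVneq (qf x) 0.
  by rewrite x0 expr0n expn_eq0 /= !mulr0.
have x_gt0 : 0 < qf x by rewrite lt_def x_neq0 qf_ge0.
elim: k => [|k IH]; first by rewrite expn0 !expr1.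
rewrite expnS mul2n -addnn -(ler_pM2r x_gt0); set N := (2 ^ k)%N.
have ge0_N y : 0 <= qf y ^+ N by rewrite exprn_ge0 ?qf_ge0.
have IH2 := ler_pM (mulr_ge0 (ge0_N _) (qf_ge0 _)) (mulr_ge0 (ge0_N _) (qf_ge0 _)) IH IH.
have -> : qf (T x) ^+ (N + N) * qf x * qf x =
          (qf (T x) ^+ N * qf x) * (qf (T x) ^+ N * qf x) by rewrite exprD; ring.
apply: le_trans IH2 _.
have -> : qf (iter N T x) * qf x ^+ N * (qf (iter N T x) * qf x ^+ N) =
          qf (iter N T x) ^+ 2 * qf x ^+ (N + N) by rewrite exprD; ring.
by rewrite [leRHS]mulrAC ler_wpM2r ?exprn_ge0 ?qf_ge0 ?sqr_qf_iter.
Qed.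

Lemma qf_sym_le (h : V -> R) c : 0 < c ->
  (forall x, qf x <= h x) -> (forall x, h (T x) <= c * h x) ->
  forall x, qf (T x) <= c * qf x.
Proof.
move=> c_gt0 qf_le_h hT x.
have h_iter j : h (iter j T x) <= c ^+ j * h x.
  elim: j => [|j IH]; first by rewrite mul1r.
  by rewrite iterS exprS -mulrA; apply: le_trans (hT _) (ler_wpM2l (ltW c_gt0) IH).
have [x0|x_neq0] := eqVneq (qf x) 0.
  have := sqr_qf_iter 1 x; rewrite x0 !mulr0 => Tx_le0.
  have : qf (T x) ^+ 2 == 0 by rewrite eq_le Tx_le0 sqr_ge0.
  by rewrite sqrf_eq0 => /eqP ->.
have x_gt0 : 0 < qf x by rewrite lt_def x_neq0 qf_ge0.
rewrite -[leRHS]mul1r -ler_pdivrMr ?mulr_gt0 //.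
apply: (@le1_of_bounded_pow2 _ _ (h x / qf x)) => k.
rewrite expr_div_n ler_pdivrMr ?exprn_gt0 ?mulr_gt0 // mulrAC ler_pdivlMr //.
apply: le_trans (qf_iter_pow2 k x) _.
rewrite exprMn mulrA ler_wpM2r ?exprn_ge0 ?qf_ge0 // mulrC.
exact: le_trans (qf_le_h _) (h_iter _).
Qed.

End SymmetricOperator.

End SemiInnerProduct.

Lemma hermitian_of_ge0 (R : realType) (V : lmodType R[i]) (f : V -> V -> R[i]) :
  (forall (a : R[i]) x y z, f (a *: x + y) z = a * f x z + f y z) ->
  (forall (a : R[i]) x y z, f z (a *: x + y) = a^* * f z x + f z y) ->
  (forall x, 0 <= f x x) ->
  forall x y, f y x = (f x y)^*.
Proof.
move=> f_linl f_linr f_ge0 x y.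
(* Polarization: f (x + y) (x + y) and f ('i y + x) ('i y + x) have zero imaginary part. *)
have f_addr z u w : f z (u + w) = f z u + f z w.
  by have := f_linr 1 u w z; rewrite scale1r rmorph1 mul1r.
have := ger0_Im (f_ge0 (x + y)); rewrite (formDl f_linl) !f_addr.
have := ger0_Im (f_ge0 ('i *: y + x)); rewrite f_linl !f_linr.
have := ger0_Im (f_ge0 x); have := ger0_Im (f_ge0 y).
case: (f x x) (f y y) (f x y) (f y x) => [a1 a2] [b1 b2] [p1 p2] [q1 q2] /= *.
by apply/eqP; rewrite eq_complex /=; apply/andP; split; apply/eqP; lra.
Qed.

Lemma bounded_op_pos_bound (R : realType) (V : lmodType R[i]) (ip : V -> V -> R[i])
    (T : V -> V) :
  bounded_op ip T -> exists2 c : R, 0 < c & forall x, hnorm ip (T x) <= c * hnorm ip x.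
Proof.
case=> _ [c Tc]; exists (Num.max c 1); first by rewrite lt_max ltr01 orbT.
by move=> x; apply: le_trans (Tc x) _; rewrite ler_wpM2r ?sqrtr_ge0 // le_max lexx.
Qed.

Lemma dwA_sqr_le (R : realType) (V : lmodType R[i]) (ip : V -> V -> R[i]) (A T : V -> V)
    (M : R) :
  0 <= M ->
  (forall z, normA ip A z = 1 ->
     Normc.normc (ipA ip A (T z) z) ^+ 2 + normA ip A (T z) ^+ 4 <= M) ->
  dwA ip A T ^+ 2 <= M.
Proof.
move=> M_ge0 HM; rewrite /dwA -(sqr_sqrtr M_ge0) lerXn2r ?nnegrE ?sqrtr_ge0 //.
  by apply: sup_ge0 => r [z [_ ->]]; exact: sqrtr_ge0.
by apply: sup_le_ub_ge0; rewrite ?sqrtr_ge0 // => r [z [z1 ->]]; apply/ler_wsqrtr/HM.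
Qed.

Section ASemiInnerProduct.
Variables (R : realType) (V : lmodType R[i]) (ip : V -> V -> R[i]) (A S Sstar Ssh : V -> V).
Hypothesis ip_linl : forall (a : R[i]) x y z, ip (a *: x + y) z = a * ip x z + ip y z.
Hypothesis ip_herm : forall x y, ip y x = (ip x y)^*.
Hypothesis ip_ge0 : forall x, 0 <= ip x x.
Hypothesis A_lin : forall (a : R[i]) x y, A (a *: x + y) = a *: A x + A y.
Hypothesis A_ge0 : forall x, 0 <= ip (A x) x.
Hypothesis S_adj : forall x y, ip (S x) y = ip x (Sstar y).
Hypothesis A_sharp : forall x, A (Ssh x) = Sstar (A x).
Variables cA cS cH : R.
Hypotheses (cA_gt0 : 0 < cA) (cS_gt0 : 0 < cS) (cH_gt0 : 0 < cH).
Hypothesis A_bound : forall x, hnorm ip (A x) <= cA * hnorm ip x.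
Hypothesis S_bound : forall x, hnorm ip (S x) <= cS * hnorm ip x.
Hypothesis Ssh_bound : forall x, hnorm ip (Ssh x) <= cH * hnorm ip x.

Local Notation ipA := (ipA ip A).
Local Notation normA := (normA ip A).

Lemma ipA_linl (a : R[i]) x y z : ipA (a *: x + y) z = a * ipA x z + ipA y z.
Proof. by rewrite /ipA A_lin ip_linl. Qed.

Lemma ipA_linr (a : R[i]) x y z : ipA z (a *: x + y) = a^* * ipA z x + ipA z y.
Proof. by rewrite /ipA ip_herm ip_linl rmorphD rmorphM /= -!ip_herm. Qed.

Lemma ipA_ge0 x : 0 <= ipA x x.
Proof. exact: A_ge0. Qed.

Lemma ipA_herm x y : ipA y x = (ipA x y)^*.
Proof. exact: (hermitian_of_ge0 ipA_linl ipA_linr ipA_ge0). Qed.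

Lemma ipA_sharpl u v : ipA (Ssh u) v = ipA u (S v).
Proof. by rewrite /ipA A_sharp ip_herm -S_adj -ip_herm. Qed.

Lemma ipA_sharp_mul_sym u v : ipA (Ssh (S u)) v = ipA u (Ssh (S v)).
Proof. by rewrite ipA_sharpl [RHS]ipA_herm ipA_sharpl -ipA_herm. Qed.

Definition A_bounded (X : V -> V) :=
  exists2 K, 0 <= K & forall x, normA (X x) <= K * normA x.

Lemma A_bounded_sharp_mul : A_bounded (fun x => Ssh (S x)).
Proof.
have cHS_ge0 : 0 <= cH * cS by rewrite mulr_ge0 ?ltW.
exists (cH * cS) => // x; apply: nf_le_of_qf_le => //.
apply: (qf_sym_le ipA_linl ipA_herm ipA_ge0 ipA_sharp_mul_sym
         (h := fun x => cA * hnorm ip x ^+ 2)).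
- by rewrite exprn_gt0 ?mulr_gt0.
- move=> y; apply: le_trans (Re_le_normc _) _.
  apply: le_trans (cauchy_schwarz ip_linl ip_herm ip_ge0 (A y) y) _.
  by rewrite expr2 mulrA ler_wpM2r ?sqrtr_ge0.
- move=> y; rewrite [leRHS]mulrCA ler_pM2l // -exprMn.
  rewrite lerXn2r ?nnegrE ?(mulr_ge0 cHS_ge0) ?sqrtr_ge0 //.
  by apply: le_trans (Ssh_bound _) _; rewrite -mulrA ler_pM2l.
Qed.

Lemma A_bounded_S : A_bounded S.
Proof.
have [K K_ge0 TK] := A_bounded_sharp_mul.
exists (Num.sqrt K) => [|x]; first exact: sqrtr_ge0.
apply: nf_le_of_qf_le; first exact: sqrtr_ge0.
rewrite sqr_sqrtr // -(sqr_nf ipA_ge0 x) /qf -ipA_sharpl.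
apply: le_trans (Re_le_normc _) _.
apply: le_trans (cauchy_schwarz ipA_linl ipA_herm ipA_ge0 _ _) _.
by rewrite expr2 mulrA; apply: ler_wpM2r; [exact: nf_ge0 | exact: TK].
Qed.

Lemma A_boundedD X Y : A_bounded X -> A_bounded Y -> A_bounded (fun x => X x + Y x).
Proof.
move=> [K1 K1_ge0 XK1] [K2 K2_ge0 YK2]; exists (K1 + K2) => [|x]; first exact: addr_ge0.
apply: le_trans (nfD_le ipA_linl ipA_herm ipA_ge0 _ _) _.
by rewrite mulrDl; apply: lerD; [exact: XK1 | exact: YK2].
Qed.

Lemma A_bounded_comp X Y : A_bounded X -> A_bounded Y -> A_bounded (fun x => X (Y x)).
Proof.
move=> [K1 K1_ge0 XK1] [K2 K2_ge0 YK2]; exists (K1 * K2) => [|x]; first exact: mulr_ge0.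
by apply: le_trans (XK1 _) _; rewrite -mulrA ler_wpM2l.
Qed.

Lemma omegaA_ge X z : A_bounded X -> normA z = 1 ->
  Normc.normc (ipA (X z) z) <= omegaA ip A X.
Proof.
move=> [K K_ge0 XK] z1; apply: ub_le_sup; last by exists z.
exists K => _ [w [w1 ->]].
apply: le_trans (cauchy_schwarz ipA_linl ipA_herm ipA_ge0 _ _) _.
change (normA (X w) * normA w <= K); rewrite w1 mulr1.
by apply: le_trans (XK w) _; rewrite w1 mulr1.
Qed.

Lemma opnormA_ge X z : A_bounded X -> normA z = 1 -> normA (X z) <= opnormA ip A X.
Proof.
move=> [K K_ge0 XK] z1; apply: ub_le_sup; last by exists z.
by exists K => _ [w [w1 ->]]; apply: le_trans (XK w) _; rewrite w1 mulr1.
Qed.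

Lemma omegaA_ge0 X : 0 <= omegaA ip A X.
Proof. by apply: sup_ge0 => _ [z [_ ->]]; exact: normc_ge0. Qed.

Lemma opnormA_ge0 X : 0 <= opnormA ip A X.
Proof. by apply: sup_ge0 => _ [z [_ ->]]; exact: sqrtr_ge0. Qed.

Lemma opnormA_sharp_mul_ge z : normA z = 1 ->
  2 * normA (S z) * normA (Ssh (S z)) <=
    opnormA ip A (fun z => Ssh (S (Ssh (S z))) + Ssh (S z)).
Proof.
move=> z1; have T_A := A_bounded_sharp_mul.
apply: le_trans (opnormA_ge (A_boundedD (A_bounded_comp T_A T_A) T_A) z1).
have re_W : complex.Re (ipA (Ssh (S (Ssh (S z))) + Ssh (S z)) z) =
             normA (Ssh (S z)) ^+ 2 + normA (S z) ^+ 2.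
  by rewrite (formDl ipA_linl) ReD ipA_sharp_mul_sym (ipA_sharpl (S z) z) !(sqr_nf ipA_ge0).
apply: (@le_trans _ _ (complex.Re (ipA (Ssh (S (Ssh (S z))) + Ssh (S z)) z))).
  by rewrite re_W; have := sqr_ge0 (normA (S z) - normA (Ssh (S z))); nra.
apply: le_trans (Re_le_normc _) _.
apply: le_trans (cauchy_schwarz ipA_linl ipA_herm ipA_ge0 _ _) _.
by rewrite [nf _ z]z1 mulr1.
Qed.

Lemma dwA_point_le alpha z : alpha != 0 -> normA z = 1 ->
  Normc.normc (ipA (S z) z) ^+ 2 + normA (S z) ^+ 4 <=
    omegaA ip A (fun z => Ssh (S z) + S z) ^+ 2
    + 2 / Normc.normc alpha * omegaA ip A (fun z => Ssh (S (S z)))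
    + Num.max 1 (Normc.normc (alpha - 1)) / Normc.normc alpha
      * opnormA ip A (fun z => Ssh (S (Ssh (S z))) + Ssh (S z)).
Proof.
move=> alpha_neq0 z1; have T_A := A_bounded_sharp_mul.
have zz : ipA z z = 1 by rewrite (formxxE ipA_ge0) -(sqr_nf ipA_ge0) [nf _ _]z1 expr1n.
set t := qf ipA (S z); have t_ge0 : 0 <= t := qf_ge0 ipA_ge0 _.
have Tz_z : ipA (Ssh (S z)) z = t%:C by rewrite ipA_sharpl (formxxE ipA_ge0).
have z_Tz : ipA z (Ssh (S z)) = t%:C by rewrite ipA_herm Tz_z conjc_real.
have -> : normA (S z) ^+ 4 = t ^+ 2.
  by rewrite (_ : 4 = 2 * 2)%N // exprM (sqr_nf ipA_ge0).
have omega1 : Normc.normc (t%:C + ipA (S z) z) <= omegaA ip A (fun z => Ssh (S z) + S z).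
  by rewrite -Tz_z -(formDl ipA_linl); exact: omegaA_ge (A_boundedD T_A A_bounded_S) z1.
have omega2 : Normc.normc (ipA (S z) (Ssh (S z))) <= omegaA ip A (fun z => Ssh (S (S z))).
  by rewrite -ipA_sharp_mul_sym; exact: omegaA_ge (A_bounded_comp T_A A_bounded_S) z1.
have opnorm := opnormA_sharp_mul_ge z1.
have buzano := buzano_ineq ipA_linl ipA_herm ipA_ge0 alpha (S z) (Ssh (S z)) zz.
rewrite z_Tz Normc.normcM normc_real ger0_norm // in buzano.
rewrite -[nf _ (S z)]/(normA (S z)) -[nf _ (Ssh (S z))]/(normA (Ssh (S z))) in buzano.
apply: le_trans (sqr_normc_addr_real_ge _ t_ge0) _; rewrite -addrA lerD //.
  by rewrite lerXn2r ?nnegrE ?normc_ge0 ?omegaA_ge0.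
have alpha_gt0 := normc_gt0 alpha_neq0.
have m_ge0 : 0 <= Num.max 1 (Normc.normc (alpha - 1)) by rewrite le_max ler01.
have m_opnorm := ler_wpM2l m_ge0 opnorm.
rewrite !(mulrAC _ (Normc.normc alpha)^-1) -mulrDl ler_pdivlMr //; nra.
Qed.

End ASemiInnerProduct.

Theorem theorem2p2 (R : realType) (V : lmodType R[i]) (ip : V -> V -> R[i])
  (A S Sstar Ssh : V -> V) (alpha : R[i]) :
  hilbert_space ip ->
  positive_op ip A ->
  bounded_op ip S ->
  is_adjoint ip S Sstar ->
  is_A_sharp ip A S Sstar Ssh ->
  alpha != 0 ->
  dwA ip A S ^+ 2 <=
    omegaA ip A (fun z => Ssh (S z) + S z) ^+ 2
    + 2 / Normc.normc alpha * omegaA ip A (fun z => Ssh (S (S z)))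
    + Num.max 1 (Normc.normc (alpha - 1)) / Normc.normc alpha
      * opnormA ip A (fun z => Ssh (S (Ssh (S z))) + Ssh (S z)).
Proof.
move=> [[ip_linl ip_herm ip_ge0 _] _] [A_bdd A_ge0] S_bdd S_adj [Ssh_bdd A_sharp _] alpha_neq0.
have [cA cA_gt0 A_bound] := bounded_op_pos_bound A_bdd.
have [cS cS_gt0 S_bound] := bounded_op_pos_bound S_bdd.
have [cH cH_gt0 Ssh_bound] := bounded_op_pos_bound Ssh_bdd.
apply: dwA_sqr_le => [|z]; last first.
  exact: (dwA_point_le ip_linl ip_herm ip_ge0 A_bdd.1 A_ge0 S_adj A_sharp
            cA_gt0 cS_gt0 cH_gt0 A_bound S_bound Ssh_bound alpha_neq0).
by rewrite !addr_ge0 ?sqr_ge0 ?mulr_ge0 ?invr_ge0 ?omegaA_ge0 ?opnormA_ge0 ?normc_ge0 ?le_max ?ler01.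
Qed.
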